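(* Let $\alpha,\beta\in\mathbb{R}$. The sequence $\{k^2+\alpha k+\beta\}_{k=0}^{\infty}$ is a classical multiplier sequence if and only if $\alpha\ge -1$ and $0\le\beta\le\frac14(\alpha+1)^2$.
   Context: A real sequence $\{\gamma_k\}_{k=0}^{\infty}$ is a classical multiplier sequence if for every real polynomial $\sum_{k=0}^n a_kx^k$ having only real zeros, the polynomial $\sum_{k=0}^n a_k\gamma_kx^k$ also has only real zeros. *)

From mathcomp Require Import all_boot all_order all_algebra.
From mathcomp Require Import complex.
From mathcomp Require Import Rstruct.
From Stdlib Require Import Rdefinitions.
Set Implicit Arguments. Unset Strict Implicit. Unset Printing Implicit Defensive.
Import Order.TTheory GRing.Theory Num.Theory.
Local Open Scope ring_scope.
Local Open Scope complex_scope.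
Local Open Scope ring_scope.

(* Convention (standard in this literature): the zero polynomial counts as
   having only real zeros. *)
Definition only_real_zeros (p : {poly R}) : Prop :=
  p = 0 \/ forall z : complex R, root (map_poly (fun x : R => x%:C) p) z -> Im z = 0.

Definition apply_mult (gamma : nat -> R) (p : {poly R}) : {poly R} :=
  \poly_(k < size p) (p`_k * gamma k).

Definition classical_multiplier_sequence (gamma : nat -> R) : Prop :=
  forall p : {poly R}, only_real_zeros p -> only_real_zeros (apply_mult gamma p).

(* The multiplier acts as the Euler-type operator [x^2 D^2 + (alpha + 1) x D + beta].
   Sufficiency: write [alpha + 1 = u + v], [beta = u v] with [u, v >= 0].  If [z]
   were a non-real zero of the image of [p], put [Q(X) = p(z (X + 1))]; then the
   image evaluated at [z] is [((D + u)(D + v) Q)(0)].  The zeros of [Q] lie on the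
   line [{X | z (X + 1) real}], which misses [0], hence in a closed half-plane
   avoiding [0]; by Laguerre's argument [D + u] and [D + v] preserve that
   half-plane, so the value at [0] cannot vanish.
   Necessity: testing on [x^k (x^2 - 1)] shows [gamma_k gamma_(k+2) >= 0], which
   for a quadratic sequence with second difference [2] forces [gamma_k >= 0] for
   all [k]; testing on [(x + 1)^n] gives discriminant conditions whose limit is
   [4 beta <= (alpha + 1)^2]; together these yield [beta >= 0] and [alpha >= -1]. *)

From Stdlib Require Import Rdefinitions.
From mathcomp Require Import all_boot all_order all_algebra.
From mathcomp Require Import complex Rstruct ring lra zify.
Set Implicit Arguments. Unset Strict Implicit. Unset Printing Implicit Defensive.
Import Order.TTheory GRing.Theory Num.Theory.
Local Open Scope ring_scope.

Lemma size_deriv_pchar0 (F : idomainType) (p : {poly F}) :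
  has_pchar0 F -> size p^`() = (size p).-1.
Proof.
move=> F0; rewrite /deriv; case Ep: (size p) => [|[|n]] /=;
  try by apply/eqP; rewrite -leqn0 size_poly.
have lc : p`_n.+1 != 0.
  by rewrite -[n.+1]/(n.+2.-1) -Ep -lead_coefE lead_coef_eq0 -size_poly_eq0 Ep.
by rewrite size_poly_eq // -mulr_natr mulf_eq0 negb_or lc (pcharf0P F).1.
Qed.

Local Open Scope complex_scope.
Local Open Scope ring_scope.

Local Notation C := (complex R).
Local Notation Re := (@complex.Re R).
Local Notation Im := (@complex.Im R).

Lemma ImC_eq0 (w : C) : 'Im w = 0 <-> Im w = 0.
Proof. by rewrite -complexIm; split => [[]|->]. Qed.

Lemma ReIm_sqr_gt0 (h : C) : h != 0 -> 0 < Re h ^+ 2 + Im h ^+ 2.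
Proof.
case: h => h1 h2 /= hn; rewrite ltNge; apply/negP => hle.
have e1 : h1 = 0 by nra.
have e2 : h2 = 0 by nra.
by move: hn; rewrite e1 e2 eqxx.
Qed.

Definition shift_deriv (c : C) (F : {poly C}) : {poly C} := F^`() + c *: F.

Lemma shift_deriv0 (c : C) : shift_deriv c 0 = 0.
Proof. by rewrite /shift_deriv deriv0 scaler0 addr0. Qed.

Lemma size_shift_deriv (c : C) (F : {poly C}) :
  ((size F).-1 <= size (shift_deriv c F))%N.
Proof.
rewrite /shift_deriv; have [->|c0] := eqVneq c 0.
  by rewrite scale0r addr0 size_deriv_pchar0 //; exact: pchar_num.
have [->|F0] := eqVneq F 0; first by rewrite size_poly0.
by rewrite addrC size_polyDl size_scale ?leq_pred // lt_size_deriv.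
Qed.

(* The product rule for [G = (X - r) H] at [w], with [d = w - r], [h = H(w)],
   [k = H'(w)], paired against [conj (G(w))]. *)
Lemma Re_conj_product_rule (mu h k d : C) :
  Re (mu^* * (h + d * k) * (d * h)^*) =
  (Re h ^+ 2 + Im h ^+ 2) * Re (mu * d) + (Re d ^+ 2 + Im d ^+ 2) * Re (mu^* * k * h^*).
Proof. by case: mu h k d => [m1 m2] [h1 h2] [k1 k2] [d1 d2] /=; ring. Qed.

Lemma prod_XsubC_logderiv (mu w : C) (c : R) (s : seq C) :
  0 < Re mu -> c < Re (mu * w) -> all (fun r => Re (mu * r) <= c) s ->
  (\prod_(r <- s) ('X - r%:P)).[w] != 0 /\
  (s != [::] -> 0 < Re (mu^* * (\prod_(r <- s) ('X - r%:P))^`().[w]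
                        * ((\prod_(r <- s) ('X - r%:P)).[w])^*)).
Proof.
move=> hmu hw; elim: s => [|r s IH] /=.
  by rewrite big_nil hornerC oner_eq0.
case/andP => hr /IH [hG hpos]; rewrite big_cons derivM derivXsubC mul1r !hornerE.
set h := _.[w] in hG hpos *; set k := _.[w] in hpos *.
have hk : 0 <= Re (mu^* * k * h^*).
  case: (eqVneq s [::]) hpos => [es _|_ /(_ isT) /ltW //].
  by rewrite /k es big_nil derivC horner0 mulr0 mul0r.
have hd : 0 < Re (mu * (w - r)) by rewrite mulrBr raddfB; lra.
have hd0 : w - r != 0 by apply: contraTneq hd => ->; rewrite mulr0 ltxx.
split=> [|_]; first by rewrite mulf_neq0.
rewrite Re_conj_product_rule; apply: ltr_pwDl; last first.
  by rewrite mulr_ge0 // addr_ge0 // sqr_ge0.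
by rewrite mulr_gt0 // ReIm_sqr_gt0.
Qed.

(* Laguerre: [D + u] with [u >= 0] keeps the zeros in a closed half-plane
   [{X | Re (mu X) <= c}] with [Re mu > 0], because [F'/F + u] has positive
   real part (after multiplying by [conj mu]) on the complementary side. *)
Lemma halfplane_shift_deriv (mu : C) (c u : R) (F : {poly C}) :
  0 < Re mu -> 0 <= u -> shift_deriv u%:C F != 0 ->
  (forall X, root F X -> Re (mu * X) <= c) ->
  forall w, root (shift_deriv u%:C F) w -> Re (mu * w) <= c.
Proof.
move=> hmu hu hF1 hK w hw; rewrite leNgt; apply/negP => hc.
have F0 : F != 0 by apply: contraNneq hF1 => ->; rewrite shift_deriv0.
have [s hs] := closed_field_poly_normal F; set G := \prod_(z <- s) _ in hs.
have hl : lead_coef F != 0 by rewrite lead_coef_eq0.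
have hall : all (fun r => Re (mu * r) <= c) s.
  by apply/allP => r hr; apply: hK; rewrite hs rootZ // root_prod_XsubC.
have [hG hpos] := prod_XsubC_logderiv hmu hc hall.
have eF : shift_deriv u%:C F = lead_coef F *: shift_deriv u%:C G.
  by rewrite /shift_deriv {1 2}hs derivZ scalerDr !scalerA mulrC.
have hwG : G^`().[w] = - (u%:C * G.[w]).
  apply/eqP; rewrite -addr_eq0; move: hw.
  by rewrite /root eF hornerZ mulf_eq0 (negbTE hl) /= hornerD hornerZ.
case: (eqVneq s [::]) hpos => [es _|_ /(_ isT)].
  have G1 : G = 1%:P by rewrite /G es big_nil.
  move: hwG hF1; rewrite eF /shift_deriv G1 derivC hornerC horner0 mulr1.
  by move/eqP; rewrite eq_sym oppr_eq0 => /eqP->; rewrite scale0r addr0 scaler0 eqxx.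
have Re_conj_scale (m g : C) :
    Re (m^* * - (u%:C * g) * g^*) = - (u * ((Re g ^+ 2 + Im g ^+ 2) * Re m)).
  by case: m g => [m1 m2] [g1 g2] /=; ring.
rewrite hwG Re_conj_scale.
by rewrite oppr_gt0 ltNge mulr_ge0 // ltW // mulr_gt0 // ReIm_sqr_gt0.
Qed.

Lemma shift_deriv2_horner0_neq0 (mu : C) (c u v : R) (F : {poly C}) :
  0 < Re mu -> c < 0 -> 0 <= u -> 0 <= v ->
  (forall X, root F X -> Re (mu * X) <= c) ->
  shift_deriv u%:C (shift_deriv v%:C F) != 0 ->
  (shift_deriv u%:C (shift_deriv v%:C F)).[0] != 0.
Proof.
move=> hmu hc hu hv hK hQ2.
have hQ1 : shift_deriv v%:C F != 0.
  by apply: contraNneq hQ2 => ->; rewrite shift_deriv0.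
have hK1 := halfplane_shift_deriv hmu hv hQ1 hK.
apply/negP => /(halfplane_shift_deriv hmu hu hQ2 hK1).
by rewrite mulr0 /=; lra.
Qed.

Lemma deriv_comp_scaleXaddC (p : {poly C}) (z : C) :
  (p \Po (z *: 'X + z%:P))^`() = z *: (p^`() \Po (z *: 'X + z%:P)).
Proof.
by rewrite deriv_comp derivD derivZ derivX derivC addr0 mulrC -scalerAl mul1r.
Qed.

(* Evaluating at [0] after the substitution [X -> z (X + 1)] turns [D] into
   [z D] at the point [z], so [(D + u)(D + v)] becomes the Euler-type
   operator [z^2 D^2 + (u + v) z D + u v] evaluated at [z]. *)
Lemma shift_deriv2_comp_horner0 (p : {poly C}) (z u v : C) :
  (shift_deriv u (shift_deriv v (p \Po (z *: 'X + z%:P)))).[0] =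
  z ^+ 2 * p^`()^`().[z] + (u + v) * z * p^`().[z] + u * v * p.[z].
Proof.
rewrite /shift_deriv derivD derivZ !deriv_comp_scaleXaddC derivZ.
rewrite deriv_comp_scaleXaddC !(hornerD, hornerZ, horner_comp, hornerX, hornerC).
by rewrite mulr0 add0r; ring.
Qed.

(* The multiplier [Im z ^+ 2 +i* (- (Re z * Im z))] is [- Im z * 'i * z]. *)
Lemma Re_mul_on_line (z X : C) : Im (z * X + z) = 0 ->
  Re ((Im z ^+ 2 +i* (- (Re z * Im z))) * X) = - Im z ^+ 2.
Proof.
case: z X => [x y] [a b] /= h.
by have /= := congr1 (fun t => y * t) h; rewrite mulr0 => hy; nra.
Qed.

Lemma only_real_zerosE (p : {poly R}) : only_real_zeros p <->
  p = 0 \/ forall z, root (map_poly (real_complex R) p) z -> Im z = 0.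
Proof.
by split=> -[->|hp]; [left | right=> z /hp /ImC_eq0 | left | right=> z /hp /ImC_eq0].
Qed.

Lemma only_real_zeros_size_le2 (q : {poly R}) : (size q <= 2)%N -> only_real_zeros q.
Proof.
move=> hq; apply/only_real_zerosE; have [->|q0] := eqVneq q 0; [by left | right].
have hs : (size (map_poly (real_complex R) q) <= 2)%N by rewrite size_map_poly.
move=> z; rewrite /root (horner_coef_wide _ hs).
rewrite !big_ord_recl big_ord0 /= !coef_map addr0 expr0 expr1 mulr1.
case: z => x y /=; set c0 := q`_0; set c1 := q`_1.
rewrite eq_complex /= !mul0r subr0 add0r addr0 => /andP [/eqP h0 /eqP h1].
have [c10|c1n0] := eqVneq c1 0; last by move/eqP: h1; rewrite mulf_eq0 (negbTE c1n0) => /eqP.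
case/eqP: q0; apply/polyP => -[|[|i]]; rewrite coef0 //; last first.
  by rewrite nth_default // (leq_trans hq).
by move: h0; rewrite -/c0 c10 mul0r addr0.
Qed.

Definition euler_op (a b : R) (p : {poly R}) : {poly R} :=
  'X^2 * p^`()^`() + a *: ('X * p^`()) + b *: p.

Lemma horner_map_euler_op (a b : R) (p : {poly R}) (z : C) :
  (map_poly (real_complex R) (euler_op a b p)).[z] =
  z ^+ 2 * (map_poly (real_complex R) p)^`()^`().[z]
  + a%:C * z * (map_poly (real_complex R) p)^`().[z]
  + b%:C * (map_poly (real_complex R) p).[z].
Proof.
rewrite !deriv_map !rmorphD !rmorphM /= !map_polyZ /= rmorphM /= map_polyX.
by rewrite !hornerE expr2.
Qed.

Lemma quadratic_nonneg_roots (a b : R) : 0 <= a -> 0 <= b -> 4%:R * b <= a ^+ 2 ->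
  exists u v : R, [/\ 0 <= u, 0 <= v, u + v = a & u * v = b].
Proof.
move=> ha hb hd; set s := Num.sqrt (a ^+ 2 - 4%:R * b).
have hs0 : 0 <= s := sqrtr_ge0 _.
have hs2 : s ^+ 2 = a ^+ 2 - 4%:R * b by rewrite sqr_sqrtr // subr_ge0.
have hsa : s <= a by rewrite -(ler_pXn2r (isT : (0 < 2)%N)) ?nnegrE //; lra.
by exists ((a + s) / 2%:R), ((a - s) / 2%:R); split; lra.
Qed.

Lemma size_scaleXaddC (z : C) : z != 0 -> size (z *: 'X + z%:P) = 2.
Proof.
by move=> z0; rewrite -alg_polyC -scalerDr size_scale // -polyC1 size_XaddC.
Qed.

Lemma euler_op_only_real_zeros (a b : R) (p : {poly R}) :
  0 <= a -> 0 <= b -> 4%:R * b <= a ^+ 2 -> (2 < size p)%N ->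
  only_real_zeros p -> only_real_zeros (euler_op a b p).
Proof.
move=> ha hb hd hp3 /only_real_zerosE [p0|hp]; first by move: hp3; rewrite p0 size_poly0.
apply/only_real_zerosE; right=> z hz; have [//|hy] := eqVneq (Im z) 0; exfalso.
have z0 : z != 0 by apply: contraNneq hy => ->.
set pc := map_poly (real_complex R) p in hp.
set Q := pc \Po (z *: 'X + z%:P).
have [u [v [hu hv huv hUV]]] := quadratic_nonneg_roots ha hb hd.
set mu : C := Im z ^+ 2 +i* (- (Re z * Im z)).
have hmu : 0 < Re mu by rewrite /= lt_def sqrf_eq0 hy sqr_ge0.
have hc : - Im z ^+ 2 < 0 by rewrite oppr_lt0.
have hQ X : root Q X -> Re (mu * X) <= - Im z ^+ 2.
  by rewrite /root horner_comp !hornerE => /hp hX; rewrite /mu Re_mul_on_line.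
have hQ2 : shift_deriv u%:C (shift_deriv v%:C Q) != 0.
  have sQ : size Q = size p by rewrite size_comp_poly2 ?size_scaleXaddC // size_map_poly.
  have := size_shift_deriv v%:C Q; have := size_shift_deriv u%:C (shift_deriv v%:C Q).
  by rewrite -size_poly_gt0 sQ; lia.
have := shift_deriv2_horner0_neq0 hmu hc hu hv hQ hQ2.
rewrite shift_deriv2_comp_horner0 -rmorphD -rmorphM huv hUV -horner_map_euler_op.
by rewrite (eqP hz) eqxx.
Qed.

Lemma coef_apply_mult (gamma : nat -> R) (p : {poly R}) (k : nat) :
  (apply_mult gamma p)`_k = p`_k * gamma k.
Proof.
rewrite coef_poly; case: ltnP => // hk.
by rewrite nth_default // mul0r.
Qed.

Definition quad_seq (alpha beta : R) (k : nat) : R := (k%:R ^+ 2 + alpha * k%:R + beta)%R.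

Lemma apply_mult_quadratic (alpha beta : R) (p : {poly R}) :
  apply_mult (quad_seq alpha beta) p = euler_op (alpha + 1)%R beta p.
Proof.
apply/polyP => k; rewrite /euler_op coef_apply_mult /quad_seq !coefD !coefZ.
rewrite coefXnM coefXM !coef_deriv.
case: k => [|[|k]] /=; first by ring.
  by rewrite mulr1n; ring.
by rewrite !subSS subn0; ring.
Qed.

Lemma only_real_zeros_prod_XsubC (s : seq R) :
  only_real_zeros (\prod_(r <- s) ('X - r%:P)).
Proof.
apply/only_real_zerosE; right=> z.
rewrite map_prod_XsubC /root horner_prod prodf_seq_eq0 => /hasP [r _].
by rewrite hornerXsubC subr_eq0 => /eqP ->.
Qed.

Lemma prod_nseq_XsubC (m : nat) (c : R) :
  \prod_(r <- nseq m c) ('X - r%:P) = ('X - c%:P) ^+ m.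
Proof. by elim: m => [|m IH]; rewrite ?big_nil // big_cons IH exprS. Qed.

Lemma quadratic_nonreal_root (A B D : R) : A != 0 -> B ^+ 2 < 4%:R * A * D ->
  exists2 z : C, A%:C * z ^+ 2 + B%:C * z + D%:C = 0 & Im z != 0.
Proof.
move=> hA hlt; set s := Num.sqrt (4%:R * A * D - B ^+ 2).
have hs : 0 < s by rewrite sqrtr_gt0 subr_gt0.
have hs2 : s ^+ 2 = 4%:R * A * D - B ^+ 2 by rewrite sqr_sqrtr // ltW // subr_gt0.
exists ((- B / (2%:R * A)) +i* (s / (2%:R * A))); last first.
  have s0 : s != 0 by rewrite gt_eqF.
  by rewrite /= mulf_neq0 // invr_eq0 mulf_neq0 // pnatr_eq0.
have hss : s / (2%:R * A) * (s / (2%:R * A)) = (4%:R * A * D - B ^+ 2) / (2%:R * A) ^+ 2.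
  by rewrite -hs2; field.
by apply/eqP; rewrite eq_complex /= hss; apply/andP; split; apply/eqP; field.
Qed.

Lemma only_real_zeros_quadratic_factor (s : {poly R}) (A B D : R) : s != 0 ->
  only_real_zeros (s * (A *: 'X^2 + B *: 'X + D%:P)) -> 4%:R * A * D <= B ^+ 2.
Proof.
move=> s0 /only_real_zerosE hp; rewrite leNgt; apply/negP => hlt.
have A0 : A != 0.
  by apply: contraTneq hlt => ->; rewrite mulr0 mul0r -leNgt sqr_ge0.
have [z hz /eqP hy] := quadratic_nonreal_root A0 hlt.
case: hp => [/eqP|hp].
  rewrite mulf_eq0 (negbTE s0) /= => /eqP/(congr1 (coefp 2)) /=.
  rewrite !coefD !coefZ coefXn coefX coefC coef0 /= mulr1 mulr0 !addr0 => A_0.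
  by rewrite A_0 eqxx in A0.
apply: hy; apply: hp; rewrite rmorphM rootM; apply/orP; right.
rewrite /root !rmorphD /= !map_polyZ /= map_polyXn map_polyX map_polyC /= !hornerE.
by rewrite -hz expr2 mulrA.
Qed.

Lemma multiplier_seq_mul_ge0 (gamma : nat -> R) (k : nat) :
  classical_multiplier_sequence gamma -> 0 <= gamma k * gamma k.+2.
Proof.
move=> hms.
have hp : only_real_zeros ('X^k * ('X^2 - 1)).
  rewrite -[_ * _](_ : \prod_(r <- nseq k 0 ++ [:: 1; -1]) ('X - r%:P) = _).
    exact: only_real_zeros_prod_XsubC.
  rewrite big_cat /= prod_nseq_XsubC !big_cons big_nil mulr1 polyC0 subr0.
  by rewrite polyCN opprK polyC1 -subr_sqr expr1n.
have := hms _ hp.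
have -> : apply_mult gamma ('X^k * ('X^2 - 1)) =
    'X^k * (gamma k.+2 *: 'X^2 + 0 *: 'X + (- gamma k)%:P).
  apply/polyP => j; rewrite coef_apply_mult !coefXnM.
  case: ltnP => hj; first by rewrite mul0r.
  move: (j - k)%N (subnKC hj) => i <-.
  rewrite coefB coefXn coef1 !coefD !coefZ coefXn coefX coefC.
  by case: i => [|[|[|i]]] /=; rewrite ?addn0 ?addn2; ring.
move/only_real_zeros_quadratic_factor => /(_ (monic_neq0 (monicXn _ _))).
nra.
Qed.

Lemma euler_op_XaddC_exp (a b : R) (m : nat) :
  euler_op a b (('X + 1) ^+ m.+2) =
  ('X + 1) ^+ m * ((m.+2%:R * m.+1%:R + a * m.+2%:R + b) *: 'X^2
                   + (a * m.+2%:R + 2%:R * b) *: 'X + b%:P).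
Proof.
have dX n : (('X + 1) ^+ n.+1 : {poly R})^`() = ('X + 1) ^+ n *+ n.+1.
  by rewrite deriv_exp derivD derivX derivC addr0 mul1r.
rewrite /euler_op dX derivMn dX (exprS _ m.+1) (exprS _ m) -!mul_polyC.
by rewrite !polyCD !polyCM !polyC_natr; ring.
Qed.

Lemma multiplier_seq_quad_discr (alpha beta : R) (m : nat) :
  classical_multiplier_sequence (quad_seq alpha beta) ->
  4%:R * beta * m.+1%:R <= (alpha + 1) ^+ 2 * m.+2%:R.
Proof.
move=> hms.
have hp : only_real_zeros (('X + 1) ^+ m.+2).
  have -> : 'X + 1 = 'X - (-1)%:P :> {poly R} by rewrite polyCN opprK polyC1.
  rewrite -prod_nseq_XsubC; exact: only_real_zeros_prod_XsubC.
have := hms _ hp; rewrite apply_mult_quadratic euler_op_XaddC_exp.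
move/only_real_zeros_quadratic_factor.
move/(_ (monic_neq0 (monic_exp _ (monicXaddC 1)))) => hd.
have : m.+2%:R * (4%:R * beta * m.+1%:R) <= m.+2%:R * ((alpha + 1) ^+ 2 * m.+2%:R).
  by lra.
by rewrite ler_pM2l.
Qed.

Lemma le_of_mulSS (F : archiRealFieldType) (x y : F) :
  (forall n : nat, x * n.+1%:R <= y * n.+2%:R) -> x <= y.
Proof.
move=> h; rewrite leNgt; apply/negP => hyx.
set N := Num.truncn (y / (x - y)).
have := truncnS_gt (y / (x - y)); rewrite -/N ltr_pdivrMr ?subr_gt0 // => hN.
by have := h N; rewrite -natr1; lra.
Qed.

Lemma quad_seq_SS (alpha beta : R) (k : nat) :
  quad_seq alpha beta k.+2 =
  2%:R * quad_seq alpha beta k.+1 - quad_seq alpha beta k + 2%:R.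
Proof. by rewrite /quad_seq -!natr1; ring. Qed.

Lemma quad_seq_ge0_large (alpha beta : R) (k : nat) :
  `|alpha| + `|beta| + 1 <= k%:R -> 0 <= quad_seq alpha beta k.
Proof.
move=> hk; rewrite /quad_seq.
have := lerNnormlW (lexx `|alpha|); have := lerNnormlW (lexx `|beta|).
have := normr_ge0 alpha; have := normr_ge0 beta; nra.
Qed.

(* A sign change from negative at [k] to positive at [k + 2] is excluded, and
   the second difference of [quad_seq] is [2 > 0], so once negative the
   sequence would stay negative, contradicting its growth. *)
Lemma quad_seq_ge0 (alpha beta : R) :
  (forall k : nat, 0 <= quad_seq alpha beta k * quad_seq alpha beta k.+2) ->
  forall k : nat, 0 <= quad_seq alpha beta k.
Proof.
move=> hsign k; rewrite leNgt; apply/negP => hk.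
have neg d : quad_seq alpha beta (k + d) < 0.
  elim: d => [|d IH]; first by rewrite addn0.
  rewrite addnS ltNge; apply/negP => hd.
  by have := hsign (k + d)%N; rewrite quad_seq_SS; nra.
set d := Num.truncn (`|alpha| + `|beta| + 1).
have /quad_seq_ge0_large : `|alpha| + `|beta| + 1 <= (k + d.+1)%:R.
  by rewrite natrD ler_wpDl // ltW // truncnS_gt.
by move=> hpos; have := neg d.+1; rewrite ltNge hpos.
Qed.

(* Near the vertex [k ~ - alpha / 2] the value is at most
   [beta - alpha ^ 2 / 4 + 1 / 4 <= (alpha + 1) / 2]. *)
Lemma quad_seq_lt0 (alpha beta : R) :
  alpha < -1 -> 4%:R * beta <= (alpha + 1) ^+ 2 ->
  exists k : nat, quad_seq alpha beta k < 0.
Proof.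
move=> ha hd; have ht : 0 <= - alpha / 2%:R + 2%:R^-1 by lra.
have /andP [hk1 hk2] := truncn_itv ht.
by exists (Num.truncn (- alpha / 2%:R + 2%:R^-1)); rewrite /quad_seq; nra.
Qed.

Theorem proposition4p4 (alpha beta : R) :
  classical_multiplier_sequence (fun k : nat => k%:R ^+ 2 + alpha * k%:R + beta)
  <-> (-1 <= alpha /\ 0 <= beta /\ beta <= (alpha + 1) ^+ 2 / 4%:R).
Proof.
rewrite -/(quad_seq alpha beta).
split=> [hms | [ha [hb hd]] p hp].
- have hpos := quad_seq_ge0 (fun k => multiplier_seq_mul_ge0 k hms).
  have hb : 0 <= beta by have := hpos 0%N; rewrite /quad_seq; lra.
  have hd : 4%:R * beta <= (alpha + 1) ^+ 2.
    exact: le_of_mulSS (fun m => multiplier_seq_quad_discr m hms).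
  have ha : -1 <= alpha.
    rewrite leNgt; apply/negP => ha; have [k] := quad_seq_lt0 ha hd.
    by rewrite ltNge hpos.
  by split; [|split]; lra.
- have [hsmall|hbig] := leqP (size p) 2.
    by apply: only_real_zeros_size_le2; exact: leq_trans (size_poly _ _) hsmall.
  by rewrite apply_mult_quadratic; apply: euler_op_only_real_zeros => //; lra.
Qed.
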